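(* Let $\mathcal{Q}$ be a nonempty convex delta-matroid on a finite set $E$, with $r=\max\{|S|:S\in\mathcal{Q}\}$ and $s=\min\{|S|:S\in\mathcal{Q}\}$. For $s\le k\le r$ let $\mathcal{Q}_k$ be the set of members of $\mathcal{Q}$ of size $k$. Then each $\mathcal{Q}_k$ is the set of bases of a matroid $\mathcal{M}_k$ on $E$, and there are strong maps $\mathcal{M}_r\to\mathcal{M}_{r-1}\to\cdots\to\mathcal{M}_{s+1}\to\mathcal{M}_s$, every composition of which is also a strong map (i.e. there is a strong map $\mathcal{M}_k\to\mathcal{M}_j$ for all $s\le j<k\le r$).
   Context: $\mathcal{Q}\subseteq 2^E$ is convex if $S\subseteq T\subseteq S'$ with $S,S'\in\mathcal{Q}$ implies $T\in\mathcal{Q}$; it is a delta-matroid if for all $A,B\in\mathcal{Q}$ and $e\in A\triangle B$ there is $f\in A\triangle B$ (possibly $f=e$) with $A\triangle\{e,f\}\in\mathcal{Q}$. A strong map $\mathcal{M}\to\mathcal{M}'$ of matroids is a matroid $\mathcal{N}$ with a distinguished subset $S\subseteq E(\mathcal{N})$ such that $\mathcal{M}\cong\mathcal{N}\setminus S$ (deletion) and $\mathcal{M}'\cong\mathcal{N}/S$ (contraction). *)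

From mathcomp Require Import all_boot.
Set Implicit Arguments. Unset Strict Implicit. Unset Printing Implicit Defensive.

Definition convex_sys (T : finType) (Q : {set {set T}}) : Prop :=
  forall S U S' : {set T}, S \in Q -> S' \in Q -> S \subset U -> U \subset S' -> U \in Q.

Definition symdiff (T : finType) (A B : {set T}) : {set T} := (A :\: B) :|: (B :\: A).

Definition delta_matroid (T : finType) (Q : {set {set T}}) : Prop :=
  forall (A B : {set T}) (e : T), A \in Q -> B \in Q -> e \in symdiff A B ->
    exists2 f, f \in symdiff A B & symdiff A [set e; f] \in Q.

Definition is_matroid_bases (T : finType) (B : {set {set T}}) : Prop :=
  B != set0 /\
  forall (B1 B2 : {set T}) (x : T), B1 \in B -> B2 \in B -> x \in B1 :\: B2 ->
    exists2 y, y \in B2 :\: B1 & (B1 :\ x) :|: [set y] \in B.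

Definition indep (T : finType) (B : {set {set T}}) (I : {set T}) : bool :=
  [exists b in B, I \subset b].

Definition deletion_bases (T : finType) (B : {set {set T}}) (S : {set T}) : {set {set T}} :=
  [set I | maxset (fun J : {set T} => indep B J && (J \subset ~: S)) I].

Definition contraction_bases (T : finType) (B : {set {set T}}) (S : {set T}) : {set {set T}} :=
  [set b :\: S | b in [set b in B |
     maxset (fun J : {set T} => indep B J && (J \subset S)) (b :&: S)]].

(* Strong map M -> M' between matroids on the same ground set E, given by their
   bases: a matroid N on E + X with distinguished set S = inr-part (so E(N) \ S is
   identified with E via inl), such that M = N \ S and M' = N / S. *)
Definition strong_map (E : finType) (M M' : {set {set E}}) : Prop :=
  exists (X : finType) (N : {set {set (E + X)%type}}),
    is_matroid_bases N /\
    let S : {set (E + X)%type} := [set inr x | x : X] in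
    [set [set inl e | e in b] | b : {set E} in M] = deletion_bases N S /\
    [set [set inl e | e in b] | b : {set E} in M'] = contraction_bases N S.

Definition level (T : finType) (Q : {set {set T}}) (k : nat) : {set {set T}} :=
  [set S in Q | #|S| == k].

(* Convexity together with the symmetric exchange axiom gives augmentation: a
   member of Q can be enlarged, inside Q, by an element of any larger member.
   Hence every level Q_k satisfies basis exchange, and any member can be padded
   up to any size between s and r.  For j < k the strong map M_k -> M_j is the
   matroid N on E + X, |X| = k - j, whose bases are the k-sets B with
   B /\ E in Q and |B /\ E| >= j.  N is itself a level of the convex
   delta-matroid {A + Y | A in Q, |A| >= j, Y <= X}; deleting X leaves the
   bases of M_k, and since X is independent in N, contracting it leaves the
   bases of M_j. *)

From mathcomp Require Import all_boot zify.
Set Implicit Arguments. Unset Strict Implicit. Unset Printing Implicit Defensive.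

Ltac finset_elementwise :=
  (apply/setP || apply/subsetP); let x := fresh "x" in move=> x; rewrite /symdiff !inE;
  repeat match goal with |- context [x == ?y] => case: (eqVneq x y) => [->|?] end;
  repeat match goal with
  | H : is_true (?a \in ?A) |- context [?a \in ?A] => rewrite H
  | H : is_true (?a \notin ?A) |- context [?a \in ?A] => rewrite (negbTE H)
  | H : is_true (?a != ?b) |- context [?a == ?b] => rewrite (negbTE H)
  | H : is_true (?a != ?b) |- context [?b == ?a] => rewrite eq_sym (negbTE H)
  end; rewrite ?eqxx /=;
  repeat match goal with |- context [?y \in ?A] => case: (y \in A) end.

Lemma in_level (T : finType) (Q : {set {set T}}) k S :
  (S \in level Q k) = (S \in Q) && (#|S| == k).
Proof. by rewrite inE. Qed.

Lemma card_swap (T : finType) (A : {set T}) x y : x \in A -> y \notin A ->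
  #|(A :\ x) :|: [set y]| = #|A|.
Proof.
move=> xA yA; rewrite setUC cardsU1 !inE negb_and yA orbT add1n.
by rewrite (cardsD1 x A) xA.
Qed.

Lemma maxset_greatest (T : finType) (P : pred {set T}) A B :
  P A -> (forall C, P C -> C \subset A) -> maxset P B = (B == A).
Proof.
move=> PA maxA; apply/maxsetP/eqP => [[PB maxB] | ->]; last first.
  by split=> // C PC sAC; apply/eqP; rewrite eqEsubset sAC andbT maxA.
by apply/esym/maxB => //; apply: maxA.
Qed.

Lemma bigminn_attained (I : finType) (P : pred I) (F : I -> nat) m i0 :
  P i0 -> (forall i, P i -> F i <= m) ->
  exists2 i, P i & F i <= \big[minn/m]_(i | P i) F i.
Proof.
move=> Pi0 leFm; case: (arg_minnP F Pi0) => i Pi minF; exists i => //.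
by elim/big_ind: _ => [|x y|i' /minF //]; [exact: leFm | rewrite leq_min => -> ->].
Qed.

Section ConvexDeltaMatroid.

Variables (T : finType) (Q : {set {set T}}).
Hypotheses (cvxQ : convex_sys Q) (dmQ : delta_matroid Q).

Lemma convex_dm_add A B e : A \in Q -> B \in Q -> e \in B :\: A ->
  e |: A \in Q \/ exists2 f, f \in A :\: B & (e |: A) :\ f \in Q.
Proof.
move=> QA QB /setDP[eB eA].
have [f fAB] : exists2 f, f \in symdiff A B & symdiff A [set e; f] \in Q.
  by apply: dmQ; rewrite // !inE eA eB.
case: (eqVneq f e) => [-> Qe | fe Qf].
  by left; rewrite (_ : e |: A = symdiff A [set e; e]) //; finset_elementwise.
move: fAB; rewrite /symdiff !inE => /orP[/andP[fB fA] | /andP[fA fB]].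
  right; exists f; first by rewrite inE fA fB.
  by rewrite (_ : (e |: A) :\ f = symdiff A [set e; f]) //; finset_elementwise.
by left; apply: (cvxQ QA Qf); finset_elementwise.
Qed.

Lemma convex_dm_remove A B a : A \in Q -> B \in Q -> a \in A :\: B ->
  A :\ a \in Q \/ exists2 f, f \in B :\: A & (A :\ a) :|: [set f] \in Q.
Proof.
move=> QA QB /setDP[aA aB].
have [f fAB] : exists2 f, f \in symdiff A B & symdiff A [set a; f] \in Q.
  by apply: dmQ; rewrite // !inE aA aB.
case: (eqVneq f a) => [-> Qa | fa Qf].
  by left; rewrite (_ : A :\ a = symdiff A [set a; a]) //; finset_elementwise.
move: fAB; rewrite /symdiff !inE => /orP[/andP[fB fA] | /andP[fA fB]].
  by left; apply: (cvxQ Qf QA); finset_elementwise.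
right; exists f; first by rewrite inE fA fB.
by rewrite (_ : (A :\ a) :|: [set f] = symdiff A [set a; f]) //; finset_elementwise.
Qed.

Lemma convex_dm_augment A B : A \in Q -> B \in Q -> #|A| < #|B| ->
  exists2 e, e \in B :\: A & e |: A \in Q.
Proof.
have [n] := ubnP #|B :\: A|; elim: n A => // n IHn A ltBAn QA QB ltAB.
have [e eBA] : exists e, e \in B :\: A.
  apply/set0Pn; rewrite setD_eq0; apply: contraTN ltAB => /subset_leq_card.
  by rewrite leqNgt.
have [|[f fAB QA']] := convex_dm_add QA QB eBA; first by exists e.
move: eBA fAB => /setDP[eB eA] /setDP[fA fB].
have fe : f != e by apply: contraNneq fB => ->.
set A' := (e |: A) :\ f in QA'.
have cardA' : #|A'| = #|A|.
  have := cardsD1 f (e |: A); have := cardsU1 e A.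
  by rewrite in_setU1 fA orbT eA /= /A'; lia.
have ltBA' : #|B :\: A'| < #|B :\: A|.
  apply: proper_card; apply/properP; split; rewrite /A'.
    by finset_elementwise.
  by exists e; rewrite !inE ?eqxx ?eB ?eA // eq_sym fe.
have ltA'B : #|A'| < #|B| by rewrite cardA'.
have [e' /setDP[e'B e'A'] QC] := IHn A' (leq_trans ltBA' (ltnSE ltBAn)) QA' QB ltA'B.
have e'f : e' != f by apply: contraNneq fB => <-.
move: e'A'; rewrite /A' !inE e'f negb_or => /andP[e'e e'A].
(* C = A + e + e' - f; adding f back to C and dropping e or e' lands on A + e'
   or A + e, and the alternative A + e + e' contains A + e. *)
set C := e' |: A' in QC.
have fAC : f \in A :\: C by rewrite /C /A' !inE eqxx eq_sym (negbTE e'f) fA.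
have [QfC|[g /setDP[gC gA] QfCg]] := convex_dm_add QC QA fAC.
  exists e; first by rewrite inE eA eB.
  by apply: (cvxQ QA QfC); rewrite /C /A'; finset_elementwise.
case: (eqVneq g e) QfCg => [-> QfCe | ge QfCg].
  exists e'; first by rewrite inE e'A e'B.
  suff -> : e' |: A = (f |: C) :\ e by [].
  by rewrite /C /A'; finset_elementwise.
exists e; first by rewrite inE eA eB.
suff -> : e |: A = (f |: C) :\ g by [].
move: gC; rewrite /C /A' !inE (negbTE ge) (negbTE gA) andbF orbF => /eqP->.
by finset_elementwise.
Qed.

Lemma convex_dm_exchange A B a : A \in Q -> B \in Q -> #|A| <= #|B| -> a \in A :\: B ->
  exists2 f, f \in B :\: A & (A :\ a) :|: [set f] \in Q.
Proof.
move=> QA QB leAB aAB; have [QAa|//] := convex_dm_remove QA QB aAB.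
have /setDP[aA aB] := aAB.
have ltAaB : #|A :\ a| < #|B| by rewrite (cardsD1 a A) aA in leAB.
have [f /setDP[fB fAa] QAaf] := convex_dm_augment QAa QB ltAaB.
exists f; last by rewrite setUC.
by rewrite inE fB andbT; move: fAa; rewrite !inE negb_and negbK => /orP[/eqP fa|//]; move: aB; rewrite -fa fB.
Qed.

Lemma convex_dm_level_superset A B k : A \in Q -> B \in Q -> #|A| <= k -> k <= #|B| ->
  exists2 C, C \in level Q k & A \subset C.
Proof.
move=> QA QB; elim: k => [|k IHk] leAk leKB.
  by exists A; [rewrite in_level QA -leqn0 | exact: subxx].
have [eqAk|neAk] := eqVneq #|A| k.+1.
  by exists A; [rewrite in_level QA eqAk eqxx | exact: subxx].
have leAk' : #|A| <= k by rewrite -ltnS ltn_neqAle neAk leAk.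
have [C] := IHk leAk' (ltnW leKB).
rewrite in_level => /andP[QC /eqP cardC] sAC.
have ltCB : #|C| < #|B| by rewrite cardC.
have [e /setDP[_ eC] QeC] := convex_dm_augment QC QB ltCB.
exists (e |: C); first by rewrite in_level QeC cardsU1 eC cardC add1n eqxx.
exact: subset_trans sAC (subsetUr _ _).
Qed.

Lemma level_matroid_bases k : level Q k != set0 -> is_matroid_bases (level Q k).
Proof.
split=> // B1 B2 x; rewrite !in_level => /andP[QB1 /eqP cardB1] /andP[QB2 /eqP cardB2] xB12.
have leB12 : #|B1| <= #|B2| by rewrite cardB1 cardB2.
have [y yB21 QB1y] := convex_dm_exchange QB1 QB2 leB12 xB12.
have /setDP[_ yB1] := yB21; have /setDP[xB1 _] := xB12.
by exists y; rewrite // in_level QB1y card_swap // cardB1 eqxx.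
Qed.

End ConvexDeltaMatroid.

Definition upper_levels (T : finType) (Q : {set {set T}}) (j : nat) : {set {set T}} :=
  [set A in Q | j <= #|A|].

Lemma convex_upper_levels (T : finType) (Q : {set {set T}}) j :
  convex_sys Q -> convex_sys (upper_levels Q j).
Proof.
move=> cvxQ S U S'; rewrite !inE => /andP[QS leS] /andP[QS' _] sSU sUS'.
by rewrite (cvxQ _ _ _ QS QS' sSU sUS') (leq_trans leS (subset_leq_card sSU)).
Qed.

Lemma delta_matroid_upper_levels (T : finType) (Q : {set {set T}}) j :
  convex_sys Q -> delta_matroid Q -> delta_matroid (upper_levels Q j).
Proof.
move=> cvxQ dmQ A B e; rewrite !inE => /andP[QA leA] /andP[QB leB].
case/orP=> [/andP[eB eA] | /andP[eA eB]].
  have eAB : e \in A :\: B by rewrite inE eA eB.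
  have swap f : f \in B :\: A -> (A :\ e) :|: [set f] \in Q ->
      exists2 f, f \in symdiff A B & symdiff A [set e; f] \in upper_levels Q j.
    move=> /setDP[fB fA] Qf; have fe : f != e by apply: contraNneq eB => <-.
    exists f; first by rewrite !inE fA fB orbT.
    have -> : symdiff A [set e; f] = (A :\ e) :|: [set f] by finset_elementwise.
    by rewrite inE Qf card_swap.
  have [QAe|[f]] := convex_dm_remove cvxQ dmQ QA QB eAB; last exact: swap.
  have [ltjA|leAj] := ltnP j #|A|.
    exists e; first by rewrite !inE eA eB.
    have -> : symdiff A [set e; e] = A :\ e by finset_elementwise.
    by rewrite inE QAe; have := cardsD1 e A; rewrite eA /=; lia.
  have [f] := convex_dm_exchange cvxQ dmQ QA QB (leq_trans leAj leB) eAB.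
  exact: swap.
have eBA : e \in B :\: A by rewrite inE eA eB.
have [QeA|[f /setDP[fA fB] Qf]] := convex_dm_add cvxQ dmQ QA QB eBA.
  exists e; first by rewrite !inE eA eB.
  have -> : symdiff A [set e; e] = e |: A by finset_elementwise.
  by rewrite inE QeA (leq_trans leA (subset_leq_card (subsetUr _ _))).
have fe : f != e by apply: contraNneq fB => ->.
exists f; first by rewrite !inE fA fB.
have -> : symdiff A [set e; f] = (e |: A) :\ f by finset_elementwise.
rewrite inE Qf; have -> : (e |: A) :\ f = (A :\ f) :|: [set e] by finset_elementwise.
by rewrite card_swap.
Qed.

Lemma preimset_symdiff (aT rT : finType) (f : aT -> rT) (A B : {set rT}) :
  f @^-1: symdiff A B = symdiff (f @^-1: A) (f @^-1: B).
Proof. by rewrite /symdiff preimsetU !preimsetD. Qed.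

Definition free_sum (E X : finType) (Q : {set {set E}}) : {set {set (E + X)%type}} :=
  [set S : {set (E + X)%type} | inl @^-1: S \in Q].

Lemma convex_free_sum (E X : finType) (Q : {set {set E}}) :
  convex_sys Q -> convex_sys (free_sum X Q).
Proof.
move=> cvxQ S U S'; rewrite !inE => QS QS' sSU sUS'.
exact: cvxQ QS QS' (preimsetS _ sSU) (preimsetS _ sUS').
Qed.

Lemma delta_matroid_free_sum (E X : finType) (Q : {set {set E}}) :
  delta_matroid Q -> delta_matroid (free_sum X Q).
Proof.
move=> dmQ S U z QS QU zSU; rewrite !inE in QS QU; case: z zSU => [e | x] zSU.
  have eSU : e \in symdiff (inl @^-1: S) (inl @^-1: U) by rewrite -preimset_symdiff inE.
  have [f fSU Qf] := dmQ _ _ _ QS QU eSU.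
  exists (inl f); first by move: fSU; rewrite -preimset_symdiff inE.
  rewrite inE preimset_symdiff; congr (_ \in Q): Qf.
  by congr symdiff; apply/setP => y; rewrite !inE.
exists (inr x) => //; rewrite inE preimset_symdiff; congr (_ \in Q): QS.
by apply/setP => y; rewrite /symdiff !inE; case: (inl y \in S).
Qed.

Section SumSets.

Variables E X : finType.
Local Notation S := ([set inr x | x : X] : {set (E + X)%type}).

Lemma inl_in_inl_image (A : {pred E}) e :
  (inl e \in ([set inl e | e in A] : {set (E + X)%type})) = (e \in A).
Proof. exact: mem_imset inl_inj. Qed.

Lemma inr_in_inr_image (A : {pred X}) x :
  (inr x \in ([set inr x | x in A] : {set (E + X)%type})) = (x \in A).
Proof. exact: mem_imset inr_inj. Qed.

Lemma inr_notin_inl_image (A : {pred E}) x :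
  (inr x \in ([set inl e | e in A] : {set (E + X)%type})) = false.
Proof. by apply/imsetP => -[]. Qed.

Lemma inl_notin_inr_image (A : {pred X}) e :
  (inl e \in ([set inr x | x in A] : {set (E + X)%type})) = false.
Proof. by apply/imsetP => -[]. Qed.

Definition sum_imsetE :=
  (inl_in_inl_image, inr_in_inr_image, inr_notin_inl_image, inl_notin_inr_image).

Lemma setD_inr_image (B : {set (E + X)%type}) :
  B :\: S = [set inl e | e in inl @^-1: B].
Proof. by apply/setP => -[e | x]; rewrite !inE ?sum_imsetE /= ?inE. Qed.

Lemma setI_inr_image (B : {set (E + X)%type}) :
  B :&: S = [set inr x | x in inr @^-1: B].
Proof. by apply/setP => -[e | x]; rewrite !inE ?sum_imsetE /= ?inE ?andbF ?andbT. Qed.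

Lemma preimset_inl_image (A : {set E}) :
  inl @^-1: ([set inl e | e in A] : {set (E + X)%type}) = A.
Proof. by apply/setP => e; rewrite inE sum_imsetE. Qed.

Lemma inl_image_preimset (B : {set (E + X)%type}) :
  B \subset ~: S -> [set inl e | e in inl @^-1: B] = B.
Proof. by move=> sBS; rewrite -setD_inr_image; apply/setDidPl; rewrite disjoints_subset. Qed.

Lemma preimset_inl_inr_image (A : {set E}) :
  inl @^-1: ([set inl e | e in A] :|: S) = A.
Proof. by apply/setP => e; rewrite !inE !sum_imsetE orbF. Qed.

Lemma card_sum_set (B : {set (E + X)%type}) :
  #|B| = #|inl @^-1: B| + #|inr @^-1: B|.
Proof.
rewrite -(cardsID S B) setD_inr_image setI_inr_image addnC.
by rewrite !card_imset // => ? ? [].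
Qed.

End SumSets.

Definition lift_bases (E X : finType) (Q : {set {set E}}) (j k : nat) :
  {set {set (E + X)%type}} := level (free_sum X (upper_levels Q j)) k.

Section LiftBases.

Variables (E X : finType) (Q : {set {set E}}) (j k : nat).
Local Notation S := ([set inr x | x : X] : {set (E + X)%type}).
Local Notation N := (lift_bases X Q j k).

Lemma in_lift_bases B :
  (B \in N) = [&& inl @^-1: B \in Q, j <= #|inl @^-1: B| & #|B| == k].
Proof. by rewrite in_level !inE andbA. Qed.

Lemma inl_image_in_lift_bases b : j <= k -> b \in level Q k ->
  [set inl e | e in b] \in N.
Proof.
move=> lejk; rewrite in_level => /andP[Qb /eqP cardb].
by rewrite in_lift_bases preimset_inl_image Qb card_imset ?cardb ?lejk ?eqxx // => ? ? [].
Qed.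

Lemma inl_image_inr_in_lift_bases b : #|X| = k - j -> j <= k -> b \in level Q j ->
  [set inl e | e in b] :|: S \in N.
Proof.
move=> cardX lejk; rewrite in_level => /andP[Qb /eqP cardb].
rewrite in_lift_bases card_sum_set preimset_inl_inr_image.
have -> : inr @^-1: ([set inl e | e in b] :|: S) = setT.
  by apply/setP => x; rewrite !inE !sum_imsetE.
by rewrite Qb cardb leqnn cardsT cardX subnKC ?eqxx.
Qed.

Hypotheses (cvxQ : convex_sys Q) (dmQ : delta_matroid Q).

Lemma lift_bases_matroid : #|X| = k - j -> j <= k -> level Q j != set0 ->
  is_matroid_bases N.
Proof.
move=> cardX lejk /set0Pn[b Qjb]; apply: level_matroid_bases.
- exact/convex_free_sum/convex_upper_levels.
- exact/delta_matroid_free_sum/delta_matroid_upper_levels.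
by apply/set0Pn; exists ([set inl e | e in b] :|: S); apply: inl_image_inr_in_lift_bases.
Qed.

Lemma deletion_lift_bases U : j <= k -> U \in Q -> k <= #|U| ->
  [set [set inl e | e in b] | b : {set E} in level Q k] = deletion_bases N S.
Proof.
move=> lejk QU leKU.
have lepreimk A : A \in N -> #|inl @^-1: A| <= k.
  by rewrite in_lift_bases => /and3P[_ _ /eqP <-]; rewrite [#|A|]card_sum_set leq_addr.
have inl_basis c : c \in level Q k ->
    indep N [set inl e | e in c] && ([set inl e | e in c] \subset ~: S).
  move=> Qkc; apply/andP; split.
    by apply/exists_inP; exists [set inl e | e in c]; rewrite ?inl_image_in_lift_bases.
  by apply/subsetP => _ /imsetP[e _ ->]; rewrite !inE !sum_imsetE.
apply/setP => I; rewrite inE; apply/imsetP/maxsetP.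
  case=> b Qkb ->; split=> [|J /andP[/exists_inP[B NB sJB] sJS] sbJ]; first exact: inl_basis.
  have sb : b \subset inl @^-1: J by rewrite -(preimset_inl_image X b) preimsetS.
  suff <- : inl @^-1: J = b by rewrite inl_image_preimset.
  apply/esym/eqP; rewrite eqEcard sb.
  move: Qkb; rewrite in_level => /andP[_ /eqP ->].
  exact: leq_trans (subset_leq_card (preimsetS _ sJB)) (lepreimk _ NB).
case=> /andP[/exists_inP[B NB sIB] sIS] maxI.
have QB' : inl @^-1: B \in Q by move: NB; rewrite in_lift_bases => /andP[].
have [C Qkc sBC] := convex_dm_level_superset cvxQ dmQ QB' QU (lepreimk _ NB) leKU.
exists C => //; apply/esym/maxI; first exact: inl_basis.
rewrite -(inl_image_preimset sIS); apply: imsetS.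
exact: subset_trans (preimsetS _ sIB) sBC.
Qed.

Lemma contraction_lift_bases : #|X| = k - j -> j <= k -> level Q j != set0 ->
  [set [set inl e | e in b] | b : {set E} in level Q j] = contraction_bases N S.
Proof.
move=> cardX lejk /set0Pn[b0 Qjb0].
have indepS : indep N S.
  apply/exists_inP; exists ([set inl e | e in b0] :|: S); last exact: subsetUr.
  exact: inl_image_inr_in_lift_bases.
have maxS B : maxset (fun J => indep N J && (J \subset S)) (B :&: S) = (B :&: S == S).
  by apply: maxset_greatest => [|C /andP[]]; rewrite ?indepS ?subxx.
apply/setP => C; rewrite /contraction_bases; apply/imsetP/imsetP.
  case=> b Qjb ->; exists ([set inl e | e in b] :|: S).
    rewrite inE maxS inl_image_inr_in_lift_bases //=.
    by apply/eqP/setIidPr; exact: subsetUr.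
  by rewrite setD_inr_image preimset_inl_inr_image.
case=> B; rewrite inE maxS => /andP[NB /eqP/setIidPr sSB] ->.
exists (inl @^-1: B); last by rewrite setD_inr_image.
have inrB : inr @^-1: B = setT.
  by apply/setP => x; rewrite !inE; apply: (subsetP sSB); rewrite sum_imsetE.
move: NB; rewrite in_lift_bases in_level card_sum_set inrB cardsT cardX.
by case/and3P=> -> _ /eqP cardB; apply/eqP; lia.
Qed.

End LiftBases.

Theorem corollary4p13 (E : finType) (Q : {set {set E}}) :
  Q != set0 -> convex_sys Q -> delta_matroid Q ->
  let r := \max_(S in Q) #|S| in
  let s := \big[minn/#|E|]_(S in Q) #|S| in
  (forall k, s <= k <= r -> is_matroid_bases (level Q k)) /\
  (forall j k, s <= j -> j < k -> k <= r ->
     strong_map (level Q k) (level Q j)).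
Proof.
move=> Qn0 cvxQ dmQ r s.
have [Smax QSmax cardSmax] : exists2 S, S \in Q & #|S| = r.
  have Q_gt0 : 0 < #|Q| by rewrite card_gt0.
  have [S QS maxS] := eq_bigmax_cond (fun S : {set E} => #|S|) Q_gt0.
  by exists S; rewrite // /r maxS.
have /set0Pn[S0 QS0] := Qn0.
have [Smin QSmin leSmin] :=
  @bigminn_attained _ (mem Q) (fun S => #|S|) #|E| S0 QS0 (fun S _ => max_card S).
have levelQ_neq0 k : s <= k -> k <= r -> level Q k != set0.
  move=> lesk lekr; rewrite -cardSmax in lekr.
  have [C Qkc _] := convex_dm_level_superset cvxQ dmQ QSmin QSmax (leq_trans leSmin lesk) lekr.
  by apply/set0Pn; exists C.
split=> [k /andP[lesk lekr] | j k lesj ltjk lekr].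
  exact: level_matroid_bases (levelQ_neq0 k lesk lekr).
have lejk := ltnW ltjk.
have Qj_neq0 := levelQ_neq0 j lesj (leq_trans lejk lekr).
exists 'I_(k - j), (lift_bases 'I_(k - j) Q j k); split.
  by apply: lift_bases_matroid; rewrite ?card_ord.
split; first by apply: (deletion_lift_bases _ cvxQ dmQ lejk QSmax); rewrite cardSmax.
by apply: contraction_lift_bases; rewrite ?card_ord.
Qed.
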